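(* Let $(A,I)$ be a transversal prism and $m,n\ge0$. For $x\in W_m(A/I_n)$ with ghost coordinates $(w_0,\dots,w_m)$, the transversal coordinates $(t_0,\dots,t_{m+n})$ of $c(x)\in A/I_{m+n}$ are \[ c(x)=(\underbrace{w_m,\dots,w_m}_{n+1\text{ times}},\phi(w_{m-1}),\phi^2(w_{m-2}),\dots,\phi^m(w_0)), \] i.e.\ $t_j$ is the image of $w_m$ in $A/\phi^j(I)$ for $0\le j\le n$, and $t_{n+k}$ is the image of $\phi^k(w_{m-k})$ in $A/\phi^{n+k}(I)$ for $1\le k\le m$.
   Context: A prism $(A,I)$: a $\delta$-ring $A$ (with Frobenius lift $\phi(x)=x^p+p\delta(x)$), ideal $I$ defining a Cartier divisor, $A$ derived $(p,I)$-complete, $p\in I+\phi(I)A$; transversal means $A/I$ is $p$-torsionfree. $I_n=I\phi(I)\cdots\phi^n(I)A$. For transversal prisms the map $A/I_n\to\prod_{i=0}^nA/\phi^i(I)A$ is injective; its components $(t_0,\dots,t_n)$ are the transversal coordinates. The $C_{p^\infty}$-Tambara functor $\underline A$ has value $A/I_n$ at $C_{p^n}$ and structure maps given in transversal coordinates by $F(t_0,\dots,t_n)=(t_0,\dots,t_{n-1})$, $V(t_0,\dots,t_{n-1})=(pt_0,\dots,pt_{n-1},0)$, $N(t_0,\dots,t_{n-1})=(t_0^p,\dots,t_{n-1}^p,\phi(t_{n-1}))$; $V^k_j,N^k_j$ are composites from level $j$ to $k$. $W_m(R)$ denotes $p$-typical Witt vectors with Witt coordinates $(a_0,\dots,a_m)$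 and ghost coordinates $w_i=\sum_{k=0}^ip^ka_k^{p^{i-k}}$. The comparison map $c\colon W_m(A/I_n)\to A/I_{m+n}$ is $c(a_0,\dots,a_m)=\sum_{i=0}^mV^{m+n}_{m+n-i}N^{m+n-i}_n(a_i)$. *)

(* Elements of quotients A/J are represented by lifts in A,
   and equality in A/J by congruence modulo the ideal J (a predicate on A). *)
From mathcomp Require Import all_boot all_order all_algebra.
Set Implicit Arguments. Unset Strict Implicit. Unset Printing Implicit Defensive.
Import GRing.Theory.
Local Open Scope ring_scope.

Section Defs.
Variable A : comNzRingType.
Variable p : nat.

Definition is_ideal (J : A -> Prop) : Prop :=
  [/\ J 0, (forall x y, J x -> J y -> J (x + y)) & (forall r x, J x -> J (r * x))].

Definition gen_ideal (S : A -> Prop) (x : A) : Prop :=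
  exists (k : nat) (r g : 'I_k -> A), (forall i, S (g i)) /\ x = \sum_(i < k) r i * g i.

Definition cong (J : A -> Prop) (x y : A) : Prop := J (x - y).

Definition is_delta (delta : A -> A) : Prop :=
  [/\ delta 0 = 0, delta 1 = 0,
      (forall x y, delta (x * y) =
          x ^+ p * delta y + y ^+ p * delta x + p%:R * delta x * delta y) &
      (forall x y, delta (x + y) =
          delta x + delta y
          - \sum_(1 <= i < p) ('C(p, i) %/ p)%:R * x ^+ i * y ^+ (p - i))].

Definition phi (delta : A -> A) (x : A) : A := x ^+ p + p%:R * delta x.

Definition phiI (delta : A -> A) (I : A -> Prop) (j : nat) : A -> Prop :=
  gen_ideal (fun y => exists x, I x /\ y = iter j (phi delta) x).

Definition In (delta : A -> A) (I : A -> Prop) (n : nat) : A -> Prop :=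
  gen_ideal (fun y => exists f : nat -> A,
     (forall i, (i <= n)%N -> I (f i)) /\ y = \prod_(i < n.+1) iter i (phi delta) (f i)).

(* ---------- I defines an effective Cartier divisor ----------
   There are f_1..f_r generating the unit ideal such that, for each i,
   I A_{f_i} is generated by a non-zero-divisor d_i of A_{f_i}
   (unfolded without localizations; wlog d_i in I). *)
Definition cartier_divisor (I : A -> Prop) : Prop :=
  exists (r : nat) (f d u : 'I_r -> A),
    \sum_(i < r) u i * f i = 1 /\
    forall i, [/\ I (d i),
      (forall x, I x -> exists (k : nat) (y : A), f i ^+ k * x = d i * y) &
      (forall y, d i * y = 0 -> exists k : nat, f i ^+ k * y = 0)].

(* ---------- derived completeness ----------
   A is derived g-complete iff Rlim(... -g-> A -g-> A) = 0, i.e. both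
   lim and R^1 lim of this tower vanish. *)
Definition derived_complete_elt (g : A) : Prop :=
  (forall x : nat -> A, (forall k, x k = g * x k.+1) -> forall k, x k = 0) /\
  (forall y : nat -> A, exists x : nat -> A, forall k, x k - g * x k.+1 = y k).

Definition derived_complete_pI (I : A -> Prop) : Prop :=
  forall g, (exists r i, I i /\ g = p%:R * r + i) -> derived_complete_elt g.

Definition is_prism (delta : A -> A) (I : A -> Prop) : Prop :=
  [/\ is_delta delta, is_ideal I, cartier_divisor I, derived_complete_pI I &
      exists i j, I i /\ phiI delta I 1 j /\ p%:R = i + j].

(* transversal: A/I is p-torsionfree *)
Definition transversal_prism (delta : A -> A) (I : A -> Prop) : Prop :=
  is_prism delta I /\ forall x, I (p%:R * x) -> I x.

(* ---------- Tambara structure maps, level n -> level n+1 ----------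
   Vf n : A/I_n -> A/I_{n+1} and Nf n : A/I_n -> A/I_{n+1} (on lifts),
   specified by their transversal coordinates:
   V(t_0..t_n) = (p t_0, .., p t_n, 0),  N(t_0..t_n) = (t_0^p, .., t_n^p, phi(t_n)). *)
Definition is_Vmap (delta : A -> A) (I : A -> Prop) (Vf : nat -> A -> A) : Prop :=
  forall n x, (forall j, (j <= n)%N -> cong (phiI delta I j) (Vf n x) (p%:R * x)) /\
              cong (phiI delta I n.+1) (Vf n x) 0.

Definition is_Nmap (delta : A -> A) (I : A -> Prop) (Nf : nat -> A -> A) : Prop :=
  forall n x, (forall j, (j <= n)%N -> cong (phiI delta I j) (Nf n x) (x ^+ p)) /\
              cong (phiI delta I n.+1) (Nf n x) (phi delta x).

Fixpoint iter_lvl (G : nat -> A -> A) (j d : nat) (x : A) : A :=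
  match d with
  | 0 => x
  | d'.+1 => G (j + d')%N (iter_lvl G j d' x)
  end.

Definition cmap (Vf Nf : nat -> A -> A) (m n : nat) (a : nat -> A) : A :=
  \sum_(i < m.+1) iter_lvl Vf (m + n - i) i (iter_lvl Nf n (m - i) (a i)).

Definition ghost (a : nat -> A) (i : nat) : A :=
  \sum_(k < i.+1) (p ^ k)%:R * a k ^+ (p ^ (i - k)).

End Defs.

From HB Require Import structures.
From mathcomp Require Import all_boot all_order all_algebra.
From mathcomp Require Import ring zify.
Import GRing.Theory.
Local Open Scope ring_scope.

Set Implicit Arguments.
Unset Strict Implicit.

(* The Frobenius lift phi is a ring endomorphism carrying phi^L(I)A into
   phi^(L+1)(I)A, so it turns congruences modulo phi^L(I) into congruences
   modulo phi^(L+1)(I).  Hence the composite N^d of norm maps starting at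
   level n has transversal coordinates x^(p^d) at every j <= n and
   phi^k(x)^(p^(d-k)) at n + k, while a composite V^i of transfers ending at
   level L + i multiplies the coordinates j <= L by p^i and kills the others.
   The i-th summand of c(a) therefore contributes p^i a_i^(p^(m-i)) at the
   coordinates j <= n, and phi^k(p^i a_i^(p^(m-k-i))) at n + k when
   i + k <= m (and 0 otherwise); summing over i gives the ghost components. *)

Section IdealCongruence.
Variable A : comNzRingType.

Lemma gen_ideal_is_ideal (S : A -> Prop) : is_ideal (gen_ideal S).
Proof.
split.
- by exists 0%N, (fun _ => 0), (fun _ => 0); split; [case | rewrite big_ord0].
- move=> _ _ [k1 [r1 [g1 [Sg1 ->]]]] [k2 [r2 [g2 [Sg2 ->]]]].
  exists (k1 + k2)%N, (fun i => match split i with inl i => r1 i | inr i => r2 i end).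
  exists (fun i => match split i with inl i => g1 i | inr i => g2 i end).
  split=> [i | ]; first by case: (split i).
  by rewrite big_split_ord /=; congr (_ + _); apply: eq_bigr => i _;
    rewrite ?(unsplitK (inl i)) ?(unsplitK (inr i)).
- move=> r _ [k [r1 [g [Sg ->]]]].
  exists k, (fun i => r * r1 i), g; split=> //.
  by rewrite mulr_sumr; apply: eq_bigr => i _; rewrite mulrA.
Qed.

Variable J : A -> Prop.
Hypothesis idealJ : is_ideal J.

Lemma cong_refl x : cong J x x.
Proof. by case: idealJ; rewrite /cong subrr. Qed.

Lemma cong_trans y x z : cong J x y -> cong J y z -> cong J x z.
Proof.
by case: idealJ => _ JD _ Jxy Jyz; have := JD _ _ Jxy Jyz; rewrite /cong addrA subrK.
Qed.

Lemma congD x y x' y' : cong J x x' -> cong J y y' -> cong J (x + y) (x' + y').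
Proof.
case: idealJ => _ JD _ Jx Jy.
by have := JD _ _ Jx Jy; rewrite /cong; congr J; ring.
Qed.

Lemma congM x y x' y' : cong J x x' -> cong J y y' -> cong J (x * y) (x' * y').
Proof.
case: idealJ => _ JD JM Jx Jy.
by have := JD _ _ (JM y _ Jx) (JM x' _ Jy); rewrite /cong; congr J; ring.
Qed.

Lemma congMl c x y : cong J x y -> cong J (c * x) (c * y).
Proof. exact/congM/cong_refl. Qed.

Lemma congX k x y : cong J x y -> cong J (x ^+ k) (y ^+ k).
Proof.
move=> Jxy; elim: k => [|k IHk]; first by rewrite !expr0; apply: cong_refl.
by rewrite !exprS; apply: congM.
Qed.

Lemma cong_sum n (F G : 'I_n -> A) :
  (forall i, cong J (F i) (G i)) -> cong J (\sum_(i < n) F i) (\sum_(i < n) G i).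
Proof.
move=> FG; apply: (big_ind2 (cong J)) => [|*|i _]; last exact: FG.
  exact: cong_refl.
exact: congD.
Qed.

End IdealCongruence.

Section IterRMorphism.
Variables (R : pzRingType) (f : {rmorphism R -> R}).

Lemma iter_rmorph_is_zmod_morphism k : zmod_morphism (iter k f).
Proof. by elim: k => [//|k IHk] x y /=; rewrite IHk rmorphB. Qed.

Lemma iter_rmorph_is_monoid_morphism k : monoid_morphism (iter k f).
Proof.
elim: k => [//|k [iter1 iterM]].
by split=> [|x y] /=; rewrite ?iter1 ?iterM (rmorph1, rmorphM).
Qed.

HB.instance Definition _ k :=
  GRing.isZmodMorphism.Build R R (iter k f) (iter_rmorph_is_zmod_morphism k).
HB.instance Definition _ k :=
  GRing.isMonoidMorphism.Build R R (iter k f) (iter_rmorph_is_monoid_morphism k).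

End IterRMorphism.

Lemma exprD_prime (R : comNzRingType) (p : nat) (x y : R) : prime p ->
  (x + y) ^+ p = x ^+ p + y ^+ p
    + p%:R * \sum_(1 <= i < p) ('C(p, i) %/ p)%:R * x ^+ i * y ^+ (p - i).
Proof.
move=> p_prime; have p_gt0 := prime_gt0 p_prime.
rewrite addrC exprDn -(big_mkord xpredT (fun i => y ^+ (p - i) * x ^+ i *+ 'C(p, i))).
rewrite big_ltn // big_nat_recr //= subn0 subnn bin0 binn !expr0 mulr1 mul1r !mulr1n.
rewrite [_ + x ^+ p]addrC addrA [y ^+ p + _]addrC mulr_sumr; congr (_ + _).
apply: eq_big_nat => i /andP[i_gt0 i_lt_p].
have p_dvd_bin : (p %| 'C(p, i))%N by apply: prime_dvd_bin => //; rewrite i_gt0.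
by rewrite -{1}(divnK p_dvd_bin) -mulr_natl natrM; ring.
Qed.

Section Frobenius.
Variables (A : comNzRingType) (p : nat) (delta : A -> A).
Hypotheses (p_prime : prime p) (delta_ring : is_delta p delta).

Local Notation phi := (phi p delta).

Lemma phi_is_nmod_morphism : nmod_morphism phi.
Proof.
case: delta_ring => delta0 _ _ deltaD; split=> [|x y].
  by rewrite /phi delta0 mulr0 addr0 expr0n eqn0Ngt prime_gt0.
by rewrite /phi deltaD (exprD_prime _ _ p_prime); ring.
Qed.

Lemma phi_is_monoid_morphism : monoid_morphism phi.
Proof.
case: delta_ring => _ delta1 deltaM _; split=> [|x y].
  by rewrite /phi delta1 mulr0 addr0 expr1n.
by rewrite /phi deltaM exprMn; ring.
Qed.

HB.instance Definition _ := GRing.isNmodMorphism.Build A A phi phi_is_nmod_morphism.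
HB.instance Definition _ := GRing.isMonoidMorphism.Build A A phi phi_is_monoid_morphism.

Variable I : A -> Prop.
Local Notation J := (phiI p delta I).
Let idealJ j : is_ideal (J j) := gen_ideal_is_ideal _.

Lemma phiI_phi L x : J L x -> J L.+1 (phi x).
Proof.
case=> k [r [g [Jg ->]]].
exists k, (fun i => phi (r i)), (fun i => phi (g i)); split.
  by move=> i; case: (Jg i) => z [Iz ->]; exists z.
by rewrite rmorph_sum; apply: eq_bigr => i _; rewrite rmorphM.
Qed.

Lemma cong_iter_phi L k x y :
  cong (J L) x y -> cong (J (L + k)) (iter k phi x) (iter k phi y).
Proof.
move=> Jxy; elim: k => [|k IHk]; first by rewrite addn0.
by rewrite addnS /cong /= -rmorphB; apply: phiI_phi.
Qed.

Variables Vf Nf : nat -> A -> A.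
Hypotheses (Vmap : is_Vmap p delta I Vf) (Nmap : is_Nmap p delta I Nf).

Lemma iter_lvlN_low n d x j : (j <= n)%N ->
  cong (J j) (iter_lvl Nf n d x) (x ^+ (p ^ d)).
Proof.
move=> le_jn; elim: d => [|d IHd] /=; first exact: (cong_refl (idealJ _)).
have [Nf_low _] := Nmap (n + d)%N (iter_lvl Nf n d x).
apply: (cong_trans (idealJ _) (Nf_low _ (leq_trans le_jn (leq_addr _ _)))).
by rewrite expnSr exprM; apply: (congX (idealJ _)).
Qed.

Lemma iter_lvlN_high n d x k : (k <= d)%N ->
  cong (J (n + k)) (iter_lvl Nf n d x) (iter k phi x ^+ (p ^ (d - k))).
Proof.
elim: d k => [|d IHd] k.
  by rewrite leqn0 => /eqP ->; apply: (cong_refl (idealJ _)).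
have [Nf_low Nf_top] := Nmap (n + d)%N (iter_lvl Nf n d x).
rewrite leq_eqVlt => /predU1P[-> | lt_kd] /=.
  rewrite subnn addnS; apply: (cong_trans (idealJ _) Nf_top).
  by have := cong_iter_phi 1 (IHd d (leqnn d)); rewrite subnn addn1.
apply: (cong_trans (idealJ _) (Nf_low _ _)); first by rewrite leq_add2l.
by rewrite subSn // expnSr exprM; apply/(congX (idealJ _))/IHd.
Qed.

Lemma iter_lvlV_low L d y j : (j <= L)%N ->
  cong (J j) (iter_lvl Vf L d y) (p%:R ^+ d * y).
Proof.
move=> le_jL; elim: d => [|d IHd] /=.
  by rewrite mul1r; apply: (cong_refl (idealJ _)).
have [Vf_low _] := Vmap (L + d)%N (iter_lvl Vf L d y).
apply: (cong_trans (idealJ _) (Vf_low _ (leq_trans le_jL (leq_addr _ _)))).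
by rewrite exprS -mulrA; apply: (congMl (idealJ _)).
Qed.

Lemma iter_lvlV_high L d y j : (L < j <= L + d)%N ->
  cong (J j) (iter_lvl Vf L d y) 0.
Proof.
elim: d => [|d IHd] /=; first by rewrite addn0 => /andP[/leq_trans/[apply]]; rewrite ltnn.
have [Vf_low Vf_top] := Vmap (L + d)%N (iter_lvl Vf L d y).
case/andP=> lt_Lj; rewrite addnS leq_eqVlt => /predU1P[-> // | lt_j].
apply: (cong_trans (idealJ _) (Vf_low _ lt_j)).
by rewrite -(mulr0 p%:R); apply/(congMl (idealJ _))/IHd; rewrite lt_Lj.
Qed.

Section ComparisonMap.
Variables (m n : nat) (a : nat -> A).

Local Notation summand i := (iter_lvl Vf (m + n - i) i (iter_lvl Nf n (m - i) (a i))).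

Lemma summand_low i j : (i <= m)%N -> (j <= n)%N ->
  cong (J j) (summand i) ((p ^ i)%:R * a i ^+ (p ^ (m - i))).
Proof.
move=> le_im le_jn.
apply: (cong_trans (idealJ _) (iter_lvlV_low _ _ _)); first by lia.
by rewrite -natrX; apply/(congMl (idealJ _))/iter_lvlN_low.
Qed.

Lemma summand_high i k : (i + k <= m)%N ->
  cong (J (n + k)) (summand i) (iter k phi ((p ^ i)%:R * a i ^+ (p ^ (m - k - i)))).
Proof.
move=> le_ikm.
apply: (cong_trans (idealJ _) (iter_lvlV_low _ _ _)); first by lia.
rewrite rmorphM rmorph_nat (rmorphXn (iter k phi)) -natrX subnAC.
by apply/(congMl (idealJ _))/iter_lvlN_high; lia.
Qed.

Lemma summand_vanish i k : (i <= m)%N -> (k <= m)%N -> (m < i + k)%N ->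
  cong (J (n + k)) (summand i) 0.
Proof. by move=> *; apply: iter_lvlV_high; apply/andP; split; lia. Qed.

Lemma cmap_low j : (j <= n)%N -> cong (J j) (cmap Vf Nf m n a) (ghost p a m).
Proof.
move=> le_jn; apply: (cong_sum (idealJ _)) => i.
by apply: summand_low; rewrite // -ltnS.
Qed.

Lemma cmap_high k : (k <= m)%N ->
  cong (J (n + k)) (cmap Vf Nf m n a) (iter k phi (ghost p a (m - k))).
Proof.
move=> le_km; rewrite /ghost rmorph_sum.
rewrite (big_ord_widen m.+1 (fun i => iter k phi ((p ^ i)%:R * a i ^+ (p ^ (m - k - i)))));
  last by lia.
rewrite big_mkcond; apply: (cong_sum (idealJ _)) => i.
have le_im : (i <= m)%N by rewrite -ltnS.
rewrite ltnS; case: leqP => le_i; first by apply: summand_high; lia.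
by apply: summand_vanish => //; lia.
Qed.

End ComparisonMap.
End Frobenius.

Theorem lemma4p2 (A : comNzRingType) (p : nat) (delta : A -> A) (I : A -> Prop)
    (Vf Nf : nat -> A -> A) (m n : nat) (a : nat -> A) :
  prime p ->
  transversal_prism p delta I ->
  is_Vmap p delta I Vf ->
  is_Nmap p delta I Nf ->
  (forall j, (j <= n)%N ->
     cong (phiI p delta I j) (cmap Vf Nf m n a) (ghost p a m)) /\
  (forall k, (1 <= k <= m)%N ->
     cong (phiI p delta I (n + k)) (cmap Vf Nf m n a)
          (iter k (phi p delta) (ghost p a (m - k)))).
Proof.
move=> p_prime [[delta_ring _ _ _ _] _] Vmap Nmap.
split=> [j | k /andP[_ le_km]]; first exact: cmap_low.
exact: cmap_high.
Qed.
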